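(* Let $G=(V,E)$ be a graph with vertex weights $w: V \to \mathbb{Z}^+$. There exists a set $S \subseteq V$ attaining the minimum in $\mathrm{wvi}(G) = \min_{S \subseteq V} \{ w(S) + \max_{D} w(D) \}$ (maximum over connected components $D$ of $G-S$) such that for every connected component $D$ of $G - S$ and every module $M$ of $G$, one of the following holds: (i) $M \cap D = \emptyset$, (ii) $M \subseteq D$, or (iii) $D \subseteq M$.
   Context: Graphs are finite, simple and undirected; for $X \subseteq V$, $w(X) = \sum_{x \in X} w(x)$, and connected components are identified with their vertex sets. A module of $G$ is a set $M \subseteq V$ such that every vertex $x \in V \setminus M$ is adjacent either to all vertices of $M$ or to none of them. *)

(* A finite simple graph is a symmetric irreflexive relation
   e on a finType T (vertex set V = T). *)
From mathcomp Require Import all_boot.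
Set Implicit Arguments. Unset Strict Implicit. Unset Printing Implicit Defensive.

Section Defs.
Variable T : finType.

Definition simple_graph (e : rel T) : Prop := symmetric e /\ irreflexive e.

Definition wset (w : T -> nat) (X : {set T}) : nat := \sum_(x in X) w x.

Definition del_rel (e : rel T) (S : {set T}) : rel T :=
  fun a b => [&& e a b, a \notin S & b \notin S].

Definition comp_of (e : rel T) (S : {set T}) (x : T) : {set T} :=
  [set y | (y \notin S) && connect (del_rel e S) x y].

Definition is_component (e : rel T) (S D : {set T}) : Prop :=
  exists2 x, x \notin S & D = comp_of e S x.

(* w(S) + max over components D of G - S of w(D) (max of the empty family = 0) *)
Definition wvi_val (e : rel T) (w : T -> nat) (S : {set T}) : nat :=
  wset w S + \max_(x | x \notin S) wset w (comp_of e S x).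

Definition wvi_optimal (e : rel T) (w : T -> nat) (S : {set T}) : Prop :=
  forall S' : {set T}, wvi_val e w S <= wvi_val e w S'.

Definition is_module (e : rel T) (M : {set T}) : Prop :=
  forall x, x \notin M ->
    (forall y, y \in M -> e x y) \/ (forall y, y \in M -> ~~ e x y).

End Defs.

(** Among the optimal separators take one, S, of minimum cardinality.  If a
    module M meets a component D of G - S without being contained in it or
    containing it, then some edge of D leaves M, and its endpoint outside M is
    adjacent to all of M; hence M \ D lies in S.  Deleting M \ D from S only
    merges it into D (any outside neighbour of M sees M ∩ D), so the new
    separator is still optimal and strictly smaller, a contradiction. *)
From mathcomp Require Import all_boot.
Set Implicit Arguments. Unset Strict Implicit. Unset Printing Implicit Defensive.

Section Weights.
Variables (T : finType) (w : T -> nat).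

Lemma wset_sub (A B : {set T}) : A \subset B -> wset w A <= wset w B.
Proof.
move=> sAB; rewrite /wset (big_setID (A := B) A) /=.
by move/setIidPr: sAB => ->; apply: leq_addr.
Qed.

Lemma wsetU_le (A B : {set T}) : wset w (A :|: B) <= wset w A + wset w B.
Proof.
rewrite /wset (big_setID (A := A :|: B) A) /= setUK.
by rewrite leq_add2l; apply: wset_sub; rewrite setDUl setDv set0U subsetDl.
Qed.

Lemma wsetD (A B : {set T}) : B \subset A -> wset w A = wset w B + wset w (A :\: B).
Proof. by move=> sBA; rewrite /wset (big_setID (A := A) B) /=; move/setIidPr: sBA => ->. Qed.

End Weights.

Section Connect.
Variables (T : finType) (r : rel T).

Lemma connect_exit_edge (a : {pred T}) x y :
  x \in a -> y \notin a -> connect r x y ->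
  exists u v, [/\ connect r x u, u \in a, v \notin a & r u v].
Proof.
move=> ax ay /connectP[p rp def_y]; elim: p x ax rp def_y => [|z p IHp] x ax /=.
  by move=> _ def_y; rewrite def_y ax in ay.
case/andP=> rxz rp def_y; have [az | naz] := boolP (z \in a); last first.
  by exists x, z; split.
have [u [v [czu au av ruv]]] := IHp z az rp def_y.
by exists u, v; split=> //; apply: connect_trans (connect1 rxz) czu.
Qed.

Lemma connect_closed_sub (r' : rel T) (a : {pred T}) x y :
  closed r a -> {in a &, subrel r r'} -> x \in a -> connect r x y -> connect r' x y.
Proof.
move=> cl_a rr' ax /connectP[p rp ->{y}].
elim: p x ax rp => [|z p IHp] x ax //= /andP[rxz rp].
have az : z \in a by rewrite -(cl_a _ _ rxz).
exact: connect_trans (connect1 (rr' _ _ ax az rxz)) (IHp z az rp).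
Qed.

End Connect.

Section Graph.
Variables (T : finType) (e : rel T).
Hypothesis e_sym : symmetric e.

Lemma del_rel_sym (S : {set T}) : symmetric (del_rel e S).
Proof. by move=> a b; rewrite /del_rel e_sym (andbC (a \notin S)). Qed.

Lemma comp_of_connect (S : {set T}) x y z :
  y \in comp_of e S x -> z \in comp_of e S x -> connect (del_rel e S) y z.
Proof.
rewrite !inE => /andP[_ cxy] /andP[_ cxz].
by apply: connect_trans cxz; rewrite (sym_connect_sym (@del_rel_sym S)).
Qed.

Lemma comp_of_adj (S : {set T}) x y z :
  y \in comp_of e S x -> e y z -> z \notin S -> z \in comp_of e S x.
Proof.
rewrite !inE => /andP[yS cxy] eyz zS; rewrite zS.
by apply: connect_trans cxy (connect1 _); rewrite /del_rel eyz yS zS.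
Qed.

Lemma comp_of_closed (S : {set T}) x : closed (del_rel e S) (comp_of e S x).
Proof.
apply: intro_closed; first exact/sym_connect_sym/del_rel_sym.
by move=> y z /and3P[eyz _ zS] yD; apply: comp_of_adj yD eyz zS.
Qed.

Lemma module_adj (M : {set T}) u v t :
  is_module e M -> u \in M -> v \notin M -> e v u -> t \in M -> e v t.
Proof.
move=> modM uM vM evu tM.
by case: (modM v vM) => [-> // | /(_ u uM)]; rewrite evu.
Qed.

Lemma module_diff_component_sub (S D M : {set T}) :
  is_component e S D -> is_module e M -> ~~ [disjoint M & D] -> ~~ (D \subset M) ->
  M :\: D \subset S.
Proof.
move=> [x0 _ ->{D}] modM /pred0Pn[a /andP[aM aD]] /subsetPn[z zD zM].
have [u [v [cau uM vM ruv]]] := connect_exit_edge aM zM (comp_of_connect aD zD).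
have clD := @comp_of_closed S x0.
have uD : u \in comp_of e S x0 by rewrite -(closed_connect clD cau).
have vD : v \in comp_of e S x0 by rewrite -(clD _ _ ruv).
have evu : e v u by rewrite e_sym; case/and3P: ruv.
apply/subsetP=> t /setDP[tM tD]; apply: contraR tD.
exact: comp_of_adj vD (module_adj modM uM vM evu tM).
Qed.

Lemma closed_component_module (S D M : {set T}) :
  is_component e S D -> is_module e M -> ~~ [disjoint M & D] ->
  closed (del_rel e (S :\: (M :\: D))) (D :|: M).
Proof.
move=> [x0 _ ->{D}] modM /pred0Pn[a /andP[aM aD]].
apply: intro_closed; first exact/sym_connect_sym/del_rel_sym.
move=> p q /and3P[epq _ qS'] pX; rewrite inE.
have [qM | qM] := boolP (q \in M); first by rewrite orbT.
have qS : q \notin S by move: qS'; rewrite !inE (negbTE qM) andbF.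
rewrite orbF; case/setUP: pX => [pD | pM]; first exact: comp_of_adj pD epq qS.
have eqa : e q a by apply: module_adj modM pM qM _ aM; rewrite e_sym.
by apply: comp_of_adj aD _ qS; rewrite e_sym.
Qed.

Lemma wvi_val_release (w : T -> nat) (S B D : {set T}) :
  is_component e S D -> B \subset S -> closed (del_rel e (S :\: B)) (D :|: B) ->
  wvi_val e w (S :\: B) <= wvi_val e w S.
Proof.
move=> [x0 x0S ->{D}] sBS clX; set X := comp_of e S x0 :|: B.
have outX u : u \notin X -> (u \in S :\: B) = (u \in S).
  by rewrite !inE negb_or => /andP[_ /negbTE->].
(* A component of G - (S \ B) either lies in X or avoids X, and is then a component of G - S. *)
rewrite /wvi_val (wsetD w sBS) [wset w B + _]addnC -addnA leq_add2l.
apply/bigmax_leqP=> x xS'; have [xX | xX] := boolP (x \in X).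
  have sub : comp_of e (S :\: B) x \subset X.
    by apply/subsetP=> y; rewrite inE => /andP[_ cxy]; rewrite -(closed_connect clX cxy).
  apply: leq_trans (wset_sub w sub) (leq_trans (wsetU_le w _ _) _).
  by rewrite addnC leq_add2l; apply: leq_bigmax_cond.
have sub : comp_of e (S :\: B) x \subset comp_of e S x.
  apply/subsetP=> y; rewrite inE => /andP[yS' cxy].
  have yX : y \notin X by rewrite -(closed_connect clX cxy).
  rewrite inE -(outX y yX) yS'; apply: connect_closed_sub (predC_closed clX) _ xX cxy.
  by move=> u v uX vX; rewrite /del_rel (outX u uX) (outX v vX).
apply: leq_trans (wset_sub w sub) (leq_trans _ (leq_addl _ _)).
by apply: leq_bigmax_cond; rewrite -outX.
Qed.

Lemma wvi_val_split_module (w : T -> nat) (S D M : {set T}) :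
  is_component e S D -> is_module e M -> ~~ [disjoint M & D] ->
  ~~ (M \subset D) -> ~~ (D \subset M) ->
  wvi_val e w (S :\: (M :\: D)) <= wvi_val e w S /\ #|S :\: (M :\: D)| < #|S|.
Proof.
move=> cD modM MD MnD DnM; have sBS := module_diff_component_sub cD modM MD DnM.
have clDM := closed_component_module cD modM MD.
have DB : D :|: M :\: D = D :|: M by apply/setP=> x; rewrite !inE; case: (x \in D).
split; first by apply: wvi_val_release cD sBS _; rewrite DB.
have B0 : 0 < #|M :\: D| by rewrite card_gt0 setD_eq0.
by rewrite cardsDS // ltn_subrL B0 (leq_trans B0 (subset_leq_card sBS)).
Qed.

End Graph.

Lemma exists_wvi_optimal_min_card (T : finType) (e : rel T) (w : T -> nat) :
  exists2 S : {set T}, wvi_optimal e w S &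
    forall S', wvi_val e w S' <= wvi_val e w S -> #|S| <= #|S'|.
Proof.
pose S0 := [arg min_(S < set0) wvi_val e w S].
have opt0 : wvi_optimal e w S0 by rewrite /S0; case: arg_minnP => // S _ minS S'; apply: minS.
exists [arg min_(S < S0 | wvi_val e w S <= wvi_val e w S0) #|S|].
  by case: arg_minnP => // S le0 _ S'; apply: leq_trans le0 (opt0 S').
by case: arg_minnP => // S le0 minS S' leS'; apply/minS/(leq_trans leS' le0).
Qed.

Theorem lemma11 (T : finType) (e : rel T) (w : T -> nat) :
  simple_graph e -> (forall x, 0 < w x) ->
  exists S : {set T}, wvi_optimal e w S /\
    forall D M : {set T}, is_component e S D -> is_module e M ->
      [disjoint M & D] \/ M \subset D \/ D \subset M.
Proof.
move=> [e_sym _] _.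
have [S optS minS] := exists_wvi_optimal_min_card e w.
exists S; split=> // D M cD modM.
have [MD | MD] := boolP [disjoint M & D]; first by left.
have [MsD | MnD] := boolP (M \subset D); first by right; left.
have [DsM | DnM] := boolP (D \subset M); first by right; right.
have [le_val lt_card] := wvi_val_split_module e_sym w cD modM MD MnD DnM.
by move: (minS _ le_val); rewrite leqNgt lt_card.
Qed.
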